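(* Let $C=(C_1,\dots,C_m)$ be a quantum circuit whose gates carry the distinct labels $1,\dots,m$ (gate $C_k$ has label $k$). Let $C'$ be a circuit obtained from $C$ by a finite sequence of swaps of adjacent gates whose unitaries commute, where each gate keeps its label from $C$. Let $G$ be the canonical form of $C$ and $G'$ the canonical form of $C'$, where in constructing $G'$ each vertex is labeled by the label (from $C$) of the gate it corresponds to. Then $G$ and $G'$ are the same labeled directed acyclic graph.
   Context: A gate is a unitary operation acting on a specified ordered list of qubits; we identify it with the unitary it induces on the full $n$-qubit space. Two gates $A,B$ commute if their unitaries satisfy $[A,B]=AB-BA=0$. A circuit is a finite sequence of gates $(C_1,\dots,C_m)$ (applied left to right). The canonical form of a circuit $D=(D_1,\dots,D_m)$ (each gate carrying a label) is the directed graph built as follows: start with the empty graph; for $t=1,\dots,m$: mark every vertex already in the graph as ''reachable''; add a new vertex for gate $D_t$ (labeled with $D_t$'s label); then for $s=t-1,t-2,\dots,1$ in this order, if the vertex of $D_s$ is marked reachable and $[D_s,D_t]\neq 0$, add a directed edge from the vertex of $D_s$ to the vertex of $D_t$ and mark every predecessor of the vertex of $D_s$ (every vertex from which there is a directed path to it in the current graph) as not reachable. *)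

From HB Require Import structures.
From mathcomp Require Import all_boot all_order all_algebra all_field.
Set Implicit Arguments. Unset Strict Implicit. Unset Printing Implicit Defensive.
Import GRing.Theory Num.Theory.
Local Open Scope ring_scope.

(* A gate on n qubits, identified with its unitary on the full 2^n-dim space. *)
Definition unitary (n : nat) (A : 'M[algC]_(2 ^ n)) : Prop :=
  A *m (map_mx Num.conj A)^T = 1%:M.

(* Gates are labelled 0..m-1 ('I_m); C k is the gate with label k.
   commuteb C i j <=> [C i, C j] = 0. *)
Definition commuteb (n m : nat) (C : 'I_m -> 'M[algC]_(2 ^ n)) (i j : 'I_m) : bool :=
  C i *m C j == C j *m C i.

Local Open Scope nat_scope.

(* A circuit built from the labelled gates is a sequence of labels. *)
Definition adj_swap (m : nat) (comm : 'I_m -> 'I_m -> bool) (s s' : seq 'I_m) : Prop :=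
  exists (i : nat) (a b : 'I_m),
    [/\ nth a s i = a, nth a s i.+1 = b, i.+1 < size s, comm a b &
        s' = take i s ++ [:: b; a] ++ drop i.+2 s].

Inductive swap_reach (m : nat) (comm : 'I_m -> 'I_m -> bool) : seq 'I_m -> seq 'I_m -> Prop :=
  | sr_refl s : swap_reach comm s s
  | sr_step s1 s2 s3 : adj_swap comm s1 s2 -> swap_reach comm s2 s3 -> swap_reach comm s1 s3.

Definition edge_rel (m : nat) (E : {set 'I_m * 'I_m}) : rel 'I_m :=
  fun x y => (x, y) \in E.

Definition preds (m : nat) (E : {set 'I_m * 'I_m}) (v : 'I_m) : {set 'I_m} :=
  [set u | [exists w, ((u, w) \in E) && connect (edge_rel E) w v]].

Definition inner_step (m : nat) (comm : 'I_m -> 'I_m -> bool) (x : 'I_m)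
    (st : {set 'I_m} * {set 'I_m * 'I_m}) (p : 'I_m) : {set 'I_m} * {set 'I_m * 'I_m} :=
  let: (R, E) := st in
  if (p \in R) && ~~ comm p x then
    let E' := (p, x) |: E in (R :\: preds E' p, E')
  else (R, E).

(* Outer loop: pre = labels of gates already added (in order). *)
Fixpoint canon_go (m : nat) (comm : 'I_m -> 'I_m -> bool) (pre : seq 'I_m)
    (E : {set 'I_m * 'I_m}) (s : seq 'I_m) : {set 'I_m * 'I_m} :=
  match s with
  | [::] => E
  | x :: s' =>
      let E' := (foldl (inner_step comm x) ([set y in pre], E) (rev pre)).2 in
      canon_go comm (rcons pre x) E' s'
  end.

(* Canonical form of the circuit given by the label sequence s:
   (labelled vertex set, labelled edge set). Since labels are distinct,
   a vertex is identified with its label. *)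
Definition canonical_form (m : nat) (comm : 'I_m -> 'I_m -> bool) (s : seq 'I_m)
    : {set 'I_m} * {set 'I_m * 'I_m} :=
  ([set x in s], canon_go comm [::] set0 s).

From HB Require Import structures.
From mathcomp Require Import all_boot all_order all_algebra all_field.
From mathcomp Require Import zify.
Set Implicit Arguments. Unset Strict Implicit. Unset Printing Implicit Defensive.

(* The dependency order of a circuit is the transitive closure of "u is applied
   before v and u, v do not commute". Swapping two adjacent commuting gates does
   not change it. The canonical-form algorithm computes the covering relation
   (Hasse diagram) of this order: when a gate x is added, an earlier gate p gets
   an edge to x iff p does not commute with x and p is still reachable, i.e. no
   later gate depending on p already received an edge to x; so the edges into x
   are exactly the covers of x. Hence both canonical forms are the Hasse diagram
   of one and the same order on one and the same vertex set. *)

Definition covrel (T : finType) (d : rel T) : rel T :=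
  fun a b => d a b && ~~ [exists c, d a c && d c b].

Section CoveringRelation.
Variables (T : finType) (d : rel T).
Hypothesis d_trans : forall a b c, d a b -> d b c -> d a c.

Lemma connect_covrel w v : connect (covrel d) w v -> (w == v) || d w v.
Proof.
move/connectP=> [p hp ->]; elim: p w hp => [|y p IH] w /=; first by rewrite eqxx.
case/andP=> /andP [dwy _] hp; case/orP: (IH y hp) => [/eqP <-|dyv].
  by rewrite dwy orbT.
by rewrite (d_trans dwy dyv) orbT.
Qed.

Variable rank : T -> nat.
Hypothesis rank_lt : forall a b, d a b -> rank a < rank b.

Lemma covrel_connect u v : d u v -> exists2 w, covrel d u w & connect (covrel d) w v.
Proof.
move: {2}(rank v - rank u) (leqnn (rank v - rank u)) => k.
elim: k u v => [|k IH] u v hk duv; first by have := rank_lt duv; lia.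
case: (boolP [exists c, d u c && d c v]) => [/existsP [c /andP [duc dcv]]|hn].
  have := rank_lt duc; have := rank_lt dcv => ltcv ltuc.
  have [w1 cov_cw1 cw1v] := IH c v ltac:(lia) dcv.
  have [w2 cov_uw2 cw2c] := IH u c ltac:(lia) duc.
  exists w2 => //; apply: connect_trans cw2c _.
  exact: connect_trans (connect1 cov_cw1) cw1v.
by exists v; rewrite // /covrel duv hn.
Qed.

End CoveringRelation.

Section DependencyOrder.
Variables (m : nat) (comm : 'I_m -> 'I_m -> bool).

Fixpoint dep_rev (t : seq 'I_m) : rel 'I_m :=
  match t with
  | [::] => fun _ _ => false
  | x :: t' => fun u v => dep_rev t' u v ||
      (v == x) && has (fun q => ~~ comm q x && ((u == q) || dep_rev t' u q)) t'
  end.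

(* [dep_rev] reads the circuit backwards, so that the last gate is the head. *)
Definition dep s := dep_rev (rev s).

Lemma dep_rcons s x u v : dep (rcons s x) u v =
  dep s u v || (v == x) && has (fun q => ~~ comm q x && ((u == q) || dep s u q)) s.
Proof. by rewrite /dep rev_rcons /= has_rev. Qed.

Lemma dep_mem s u v : dep s u v -> (u \in s) && (v \in s).
Proof.
elim/last_ind: s u v => [//|s x IH] u v.
rewrite dep_rcons !mem_rcons !in_cons => /orP [/IH /andP [-> ->]|]; first by rewrite !orbT.
case/andP=> /eqP -> /hasP [q qs /andP [_ /orP [/eqP ->|/IH /andP [-> _]]]];
by rewrite ?qs eqxx !orbT.
Qed.

Lemma dep_index s u v : uniq s -> dep s u v -> index u s < index v s.
Proof.
elim/last_ind: s u v => [//|s x IH] u v.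
rewrite rcons_uniq => /andP [xs us].
rewrite dep_rcons -!cats1 !index_cat => /orP [duv|].
  by have /andP [-> ->] := dep_mem duv; apply: IH.
case/andP=> /eqP -> /hasP [q qs /andP [_ hq]].
have us' : u \in s by case/orP: hq => [/eqP ->//|/dep_mem /andP []].
by rewrite us' (negbTE xs) /= eqxx addn0 index_mem.
Qed.

Lemma dep_trans s u v w : uniq s -> dep s u v -> dep s v w -> dep s u w.
Proof.
elim/last_ind: s u v w => [//|s x IH] u v w.
rewrite rcons_uniq => /andP [xs us].
have notin_x y z : dep s y z -> (y != x) && (z != x).
  by case/dep_mem/andP => ys zs; apply/andP; split; apply: contraNneq xs => <-.
rewrite !dep_rcons => huv /orP [dvw|].
  case/orP: huv => [duv|/andP [/eqP vx _]]; first by rewrite (IH _ _ _ us duv dvw).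
  by have := notin_x _ _ dvw; rewrite vx eqxx.
case/andP=> wx /hasP [q qs /andP [cq hq]].
case/orP: huv => [duv|/andP [/eqP vx _]].
  apply/orP; right; rewrite wx /=; apply/hasP; exists q => //; rewrite cq /=.
  case/orP: hq => [/eqP <-|dvq]; first by rewrite duv orbT.
  by rewrite (IH _ _ _ us duv dvq) orbT.
exfalso; case/orP: hq => [/eqP vq|dvq].
  by move: qs; rewrite -vq vx (negbTE xs).
by have := notin_x _ _ dvq; rewrite vx eqxx.
Qed.

Definition hasse s : {set 'I_m * 'I_m} := [set e | covrel (dep s) e.1 e.2].

End DependencyOrder.

Section SwapInvariance.
Variables (m : nat) (comm : 'I_m -> 'I_m -> bool).
Hypothesis commC : forall a b, comm a b = comm b a.

Lemma dep_rcons2 pre a b u v : a \notin pre -> comm a b ->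
  dep comm (rcons (rcons pre a) b) u v =
  [|| dep comm pre u v,
      (v == a) && has (fun q => ~~ comm q a && ((u == q) || dep comm pre u q)) pre |
      (v == b) && has (fun q => ~~ comm q b && ((u == q) || dep comm pre u q)) pre].
Proof.
move=> apre cab; rewrite !dep_rcons has_rcons cab /= -orbA; congr (_ || (_ || _)).
congr (_ && _); apply: eq_in_has => q qpre /=; rewrite dep_rcons.
have -> : (q == a) = false by apply: contraNF apre => /eqP <-.
by rewrite orbF.
Qed.

Lemma dep_swap pre a b rest : uniq (pre ++ [:: a; b] ++ rest) -> comm a b ->
  dep comm (pre ++ [:: a; b] ++ rest) =2 dep comm (pre ++ [:: b; a] ++ rest).
Proof.
elim/last_ind: rest => [|r y IH] hu cab u v.
  have pair_rcons x z : pre ++ [:: x; z] ++ [::] = rcons (rcons pre x) z.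
    by rewrite cats0 -!cats1 -catA.
  move: hu; rewrite cats0 cat_uniq /= !negb_or => /and4P [_ /and3P [apre bpre _] _ _].
  rewrite !pair_rcons (dep_rcons2 _ _ apre cab) (dep_rcons2 _ _ bpre); last by rewrite commC.
  by apply/idP/idP => /or3P [] ->; rewrite ?orbT.
have hu' : uniq (pre ++ [:: a; b] ++ r).
  by move: hu; rewrite -!rcons_cat rcons_uniq => /andP [].
rewrite -!rcons_cat !catA !dep_rcons -!catA IH //; congr (_ || (_ && _)).
rewrite (@eq_has_r _ (pre ++ [:: a, b & r]) (pre ++ [:: b, a & r])); last first.
  by move=> z; rewrite !mem_cat !inE; congr (_ || _); rewrite orbCA.
by apply: eq_in_has => q _ /=; rewrite IH.
Qed.

Lemma adj_swap_dep s1 s2 : adj_swap comm s1 s2 -> uniq s1 ->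
  perm_eq s1 s2 /\ dep comm s1 =2 dep comm s2.
Proof.
move=> [i [a [b [ha hb hi cab ->]]]].
have split_s1 : s1 = take i s1 ++ [:: a; b] ++ drop i.+2 s1.
  by rewrite -{1}(cat_take_drop i s1) (drop_nth a (ltnW hi)) (drop_nth a hi) ha hb.
move: split_s1; move: (take i s1) (drop i.+2 s1) => pre rest -> hu.
split; last exact: dep_swap.
by rewrite perm_cat2l perm_cat2r (perm_catC [:: a] [:: b]).
Qed.

Lemma swap_reach_dep s1 s2 : swap_reach comm s1 s2 -> uniq s1 ->
  perm_eq s1 s2 /\ dep comm s1 =2 dep comm s2.
Proof.
elim=> [s|t1 t2 t3 h12 _ IH] hu; first by split.
have [p12 d12] := adj_swap_dep h12 hu.
have [p23 d23] := IH ltac:(by rewrite -(perm_uniq p12)).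
by split=> [|u v]; [apply: perm_trans p12 p23 | rewrite d12 d23].
Qed.

End SwapInvariance.

Section SinkEdges.
Variables (m : nat) (A Y : {set 'I_m * 'I_m}) (x : 'I_m).
Hypothesis Y_into_x : forall e, e \in Y -> e.2 = x.
Hypothesis x_sink : forall e, e \in A :|: Y -> e.1 != x.

Lemma connect_drop_sink_edges w p : p != x ->
  connect (edge_rel (A :|: Y)) w p -> connect (edge_rel A) w p.
Proof.
move=> px /connectP [s]; elim: s w => [|y s IH] w /=; first by move=> _ ->.
case/andP=> hwy hp hl.
case: (boolP ((w, y) \in A)) => hA; first exact: connect_trans (connect1 hA) (IH y hp hl).
have yx : y = x by move: hwy; rewrite /edge_rel in_setU (negbTE hA) /= => /Y_into_x.
case: s hp hl IH => [|z s] /=; first by move=> _ hl; rewrite hl yx eqxx in px.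
by case/andP=> /x_sink /=; rewrite yx eqxx.
Qed.

Lemma preds_drop_sink_edges p u : p != x ->
  (u \in preds (A :|: Y) p) = [exists w, ((u, w) \in A) && connect (edge_rel A) w p].
Proof.
move=> px; rewrite /preds inE; apply/existsP/existsP => -[w /andP [huw hc]].
  have hc' := connect_drop_sink_edges px hc.
  exists w; rewrite hc' andbT.
  move: huw; rewrite in_setU => /orP [//|/Y_into_x /= wx].
  move: hc'; rewrite wx => /connectP [[|z s] /=]; first by move=> _ xp; rewrite xp eqxx in px.
  case/andP=> hz _ _; have /x_sink : (x, z) \in A :|: Y by rewrite in_setU (hz : (x, z) \in A).
  by rewrite eqxx.
exists w; rewrite in_setU huw /=.
by apply: connect_sub hc => a b hab; apply: connect1; rewrite /edge_rel in_setU (hab : (a, b) \in A).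
Qed.

End SinkEdges.

Section InnerLoop.
Variables (m : nat) (comm : 'I_m -> 'I_m -> bool) (pre : seq 'I_m) (x : 'I_m).
Hypothesis pre_x_uniq : uniq (rcons pre x).

Let D := dep comm pre.
(* [reaches_x q] is [dep comm (rcons pre x) q x], see [dep_rcons]. *)
Let reaches_x q := has (fun q0 => ~~ comm q0 x && ((q == q0) || D q q0)) pre.
Let covers_x q := reaches_x q && ~~ [exists c, D q c && reaches_x c].
Let new_edges (r : seq 'I_m) :=
  [set e : 'I_m * 'I_m | (e.2 == x) && (e.1 \in r) && covers_x e.1].

Lemma x_notin_pre : x \notin pre.
Proof. by move: pre_x_uniq; rewrite rcons_uniq => /andP []. Qed.

Lemma pre_uniq : uniq pre.
Proof. by move: pre_x_uniq; rewrite rcons_uniq => /andP []. Qed.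

Lemma reaches_x_mem q : reaches_x q -> q \in pre.
Proof. by case/hasP=> q0 q0pre /andP [_ /orP [/eqP ->//|/dep_mem /andP []]]. Qed.

Lemma D_trans a b c : D a b -> D b c -> D a c.
Proof. exact: (dep_trans pre_uniq). Qed.

Lemma D_suffix l p r q : pre = l ++ p :: r -> D p q -> q \in r.
Proof.
move=> pre_eq dpq; have := dep_index pre_uniq dpq; have /andP [_ qpre] := dep_mem dpq.
have := pre_uniq; rewrite pre_eq cat_uniq /= => /and4P [_ /norP [pl _] _ _].
move: qpre; rewrite pre_eq !index_cat (negbTE pl) /= eqxx addn0 mem_cat in_cons.
case: (boolP (q \in l)) => ql /=.
  by have := index_mem q l; rewrite ql => h _ h2; have := ltn_trans h h2; rewrite ltnn.
by case: (q =P p) => [->|_] /=; [rewrite eqxx addn0 ltnn | move=> ->].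
Qed.

(* The test applied to p by the inner loop, once the gates r after p have been
   processed, succeeds exactly when p is covered by x. A maximal (latest)
   witness b of [D p b && reaches_x b] is itself covered by x. *)
Lemma inner_test_covers l p r (reachable : bool) : pre = l ++ p :: r ->
  reachable = ~~ has (fun q => covers_x q && D p q) r ->
  reachable && ~~ comm p x = covers_x p.
Proof.
move=> pre_eq ->; have ppre : p \in pre by rewrite pre_eq mem_cat in_cons eqxx orbT.
apply/idP/idP.
  case/andP=> no_cover cpx.
  have reach_p : reaches_x p by apply/hasP; exists p => //; rewrite cpx eqxx.
  rewrite /covers_x reach_p /=; apply/negP => /existsP [c0 /andP [dpc0 reach_c0]].
  pose P c := D p c && reaches_x c.
  have Pc0 : P c0 by rewrite /P dpc0 reach_c0.
  case: (arg_maxnP (fun c => index c pre) Pc0) => b /andP [dpb reach_b] b_max.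
  move/hasP: no_cover; apply; exists b; first exact: (D_suffix pre_eq dpb).
  rewrite dpb andbT /covers_x reach_b /=; apply/negP => /existsP [c /andP [dbc reach_c]].
  have := b_max c; rewrite /P (D_trans dpb dbc) reach_c => /(_ isT) c_le_b.
  by have := dep_index pre_uniq dbc; rewrite ltnNge (c_le_b : index c pre <= index b pre).
case/andP=> reach_p no_between; apply/andP; split.
  apply/negP => /hasP [q _ /andP [/andP [reach_q _] dpq]].
  by move/existsP: no_between; apply; exists q; rewrite dpq reach_q.
case/hasP: reach_p => q0 q0pre /andP [cq0 /orP [/eqP ->//|dpq0]].
exfalso; move/existsP: no_between; apply; exists q0; rewrite dpq0 /=.
by apply/hasP; exists q0; rewrite // cq0 eqxx.
Qed.

Lemma new_edges_mem r e : e \in new_edges r -> e.1 \in pre.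
Proof. by rewrite inE => /andP [_ /andP [/reaches_x_mem]]. Qed.

Lemma preds_inner_edges p r : p \in pre ->
  forall y, (y \in preds ((p, x) |: (hasse comm pre :|: new_edges r)) p) = D y p.
Proof.
have x_out y : y \in pre -> y != x by apply: contraTneq => ->; apply: x_notin_pre.
move=> ppre y; rewrite setUCA (preds_drop_sink_edges (x := x)) ?x_out //.
- have hasse_edge : edge_rel (hasse comm pre) =2 covrel D by move=> a b; rewrite /edge_rel inE.
  apply/existsP/idP => [[w /andP [yw wp]]|dyp].
    move: yw wp; rewrite inE (eq_connect hasse_edge) /= => /andP [dyw _] wp.
    by case/orP: (connect_covrel D_trans wp) => [/eqP <-|/(D_trans dyw)].
  have [w yw wp] := covrel_connect (fun a b => @dep_index _ comm pre a b pre_uniq) dyp.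
  by exists w; rewrite inE yw (eq_connect hasse_edge).
- by move=> e; rewrite !inE => /orP [/eqP -> //|/andP [/andP [/eqP -> _] _]].
- move=> e; rewrite !inE => /or3P [/andP [/dep_mem /andP [e1pre _] _]|/eqP ->|e_new].
  + exact: x_out.
  + exact: x_out.
  + by apply/x_out/(@new_edges_mem r); rewrite inE e_new.
Qed.

Lemma inner_loop_invariant r l : pre = l ++ r ->
  let st := foldl (inner_step comm x) ([set y in pre], hasse comm pre) (rev r) in
  st.2 = hasse comm pre :|: new_edges r /\
  forall y, y \in l -> (y \in st.1) = ~~ has (fun q => covers_x q && D y q) r.
Proof.
elim: r l => [|p r IH] l /=.
  move=> pre_eq; split; last by move=> y yl; rewrite inE pre_eq cats0 yl.
  by apply/setP => e; rewrite !inE /= andbF orbF.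
move=> pre_eq; have pre_eq' : pre = rcons l p ++ r by rewrite pre_eq cat_rcons.
rewrite rev_cons foldl_rcons.
move: (IH _ pre_eq'); case: (foldl _ _ (rev r)) => R E /= [E_eq R_eq].
have ppre : p \in pre by rewrite pre_eq mem_cat in_cons eqxx orbT.
have R_p := R_eq p ltac:(by rewrite mem_rcons mem_head).
have yl_rcons y : y \in l -> y \in rcons l p by move=> yl; rewrite mem_rcons in_cons yl orbT.
rewrite (inner_test_covers pre_eq R_p); case: (boolP (covers_x p)) => cov_p /=; split.
- apply/setP => -[e1 e2]; rewrite E_eq !inE /= xpair_eqE.
  case: (e1 =P p) => [->|_] //=.
  by case: (e2 =P x) => [->|_] /=; rewrite ?cov_p ?eqxx ?orbT ?andbT ?andbF ?orbF.
- move=> y yl; rewrite in_setD E_eq (preds_inner_edges r ppre) R_eq ?yl_rcons //.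
  by rewrite negb_or.
- apply/setP => -[e1 e2]; rewrite E_eq !inE /=.
  by case: (e1 =P p) => [->|_] //=; rewrite (negbTE cov_p) !andbF orbF.
- by move=> y yl; rewrite R_eq ?yl_rcons //= (negbTE cov_p).
Qed.

Lemma inner_loop_hasse :
  (foldl (inner_step comm x) ([set y in pre], hasse comm pre) (rev pre)).2
  = hasse comm (rcons pre x).
Proof.
have [-> _] := @inner_loop_invariant pre [::] erefl.
have D_x a : D a x = false by apply/negP => /dep_mem /andP [_]; rewrite (negbTE x_notin_pre).
have D_x' a : D x a = false by apply/negP => /dep_mem /andP []; rewrite (negbTE x_notin_pre).
have reach_x : reaches_x x = false.
  by apply/negP => /reaches_x_mem; rewrite (negbTE x_notin_pre).
have dep_x a b : dep comm (rcons pre x) a b = D a b || (b == x) && reaches_x a.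
  by rewrite dep_rcons.
apply/setP => -[u v]; rewrite !inE /covrel /= dep_x.
case: (v =P x) => [->|vx].
  have -> : [exists c, dep comm (rcons pre x) u c && dep comm (rcons pre x) c x] =
            [exists c, D u c && reaches_x c].
    apply: eq_existsb => c; rewrite !dep_x D_x eqxx /=.
    by case: (c =P x) => [->|_]; rewrite ?reach_x ?D_x' ?andbF ?orbF.
  rewrite (D_x u : dep comm pre u x = false) D_x /= /covers_x.
  case: (boolP (reaches_x u)) => reach_u /=; first by rewrite (reaches_x_mem reach_u).
  by rewrite andbF.
have -> : [exists c, dep comm (rcons pre x) u c && dep comm (rcons pre x) c v] =
          [exists c, D u c && D c v].
  apply: eq_existsb => c; rewrite !dep_x; have -> : (v == x) = false by apply/eqP.
  by case: (c =P x) => [->|_] /=; rewrite ?D_x' ?andbF ?orbF.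
by rewrite /= !orbF.
Qed.

End InnerLoop.

Section CanonicalForm.
Variables (m : nat) (comm : 'I_m -> 'I_m -> bool).

Lemma canon_go_hasse pre s : uniq (pre ++ s) ->
  canon_go comm pre (hasse comm pre) s = hasse comm (pre ++ s).
Proof.
elim: s pre => [|x s IH] pre hu /=; first by rewrite cats0.
have hu' : uniq (rcons pre x ++ s) by rewrite cat_rcons.
rewrite inner_loop_hasse; last by move: hu'; rewrite cat_uniq => /andP [].
by rewrite IH // cat_rcons.
Qed.

Lemma canonical_form_hasse s : uniq s -> canonical_form comm s = ([set x in s], hasse comm s).
Proof.
move=> hu; rewrite /canonical_form.
have -> : (set0 : {set 'I_m * 'I_m}) = hasse comm [::] by apply/setP => e; rewrite !inE.
by rewrite canon_go_hasse.
Qed.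

Lemma eq_hasse s1 s2 : dep comm s1 =2 dep comm s2 -> hasse comm s1 = hasse comm s2.
Proof.
move=> eq_dep; apply/setP => -[u v]; rewrite !inE /covrel /= eq_dep.
by congr (_ && ~~ _); apply: eq_existsb => c; rewrite !eq_dep.
Qed.

End CanonicalForm.

Theorem mainTheorem1 (n m : nat) (C : 'I_m -> 'M[algC]_(2 ^ n))
    (HU : forall k, unitary (C k)) (C' : seq 'I_m)
    (HC' : swap_reach (commuteb C) (enum 'I_m) C') :
  canonical_form (commuteb C) C' = canonical_form (commuteb C) (enum 'I_m).
Proof.
have commC a b : commuteb C a b = commuteb C b a by rewrite /commuteb eq_sym.
have enum_uniq := enum_uniq 'I_m.
have [perm_C' dep_C'] := swap_reach_dep commC HC' enum_uniq.
rewrite !canonical_form_hasse //; last by rewrite -(perm_uniq perm_C').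
congr (_, _); last by apply: eq_hasse => u v; rewrite dep_C'.
by apply/setP => y; rewrite !inE (perm_mem perm_C').
Qed.
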